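(* $C_3(22) = 9$.
   Context: For positive integers $m, r$, $C_m(r)$ is the minimum odd positive integer $n$ such that there exist vectors $v_1, \ldots, v_n \in \mathbb{Z}^m$ (not necessarily distinct) with $|v_i| = \sqrt{r}$ (Euclidean norm) for every $i$ and $v_1 + \cdots + v_n = \mathbf{0}$; if no such odd $n$ exists, $C_m(r) = 0$. *)

From mathcomp Require Import all_boot all_algebra.
Set Implicit Arguments. Unset Strict Implicit. Unset Printing Implicit Defensive.
Import GRing.Theory Num.Theory.
Local Open Scope ring_scope.

Definition sqnorm (m : nat) (v : 'rV[int]_m) : int := \sum_(j < m) v 0 j ^+ 2.

Definition admissible (m r n : nat) : Prop :=
  exists v : 'I_n -> 'rV[int]_m,
    (forall i, sqnorm (v i) = r%:Z) /\ \sum_(i < n) v i = 0.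

Definition C_is (m r c : nat) : Prop :=
  (c = 0%N /\ forall n, odd n -> ~ admissible m r n) \/
  (odd c /\ admissible m r c /\ forall n, odd n -> (n < c)%N -> ~ admissible m r n).

(* The only way to write 22 as a sum of three squares is 4 + 9 + 9, so a vector
   of norm sqrt 22 in Z^3 has one coordinate in {2, -2} and two in {3, -3}.
   Fix a coordinate and let p, m, a, b count the entries 2, -2, 3, -3 in it
   among n vectors summing to 0.  Then 2 (p - m) = 3 (b - a): hence a + b is
   even, so for odd n the number p + m of entries +-2 is odd; and 3 divides the
   odd, hence nonzero, p - m, so p + m >= 3.  As each vector has exactly one
   entry +-2, summing over the three coordinates gives n >= 9. *)
From mathcomp Require Import all_boot all_algebra zify ring.
Set Implicit Arguments. Unset Strict Implicit. Unset Printing Implicit Defensive.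
Import GRing.Theory Num.Theory.
Local Open Scope ring_scope.

Definition pm2 : seq int := [:: 2; -2].
Definition pm23 : seq int := [:: 2; -2; 3; -3].

Lemma balanced_twos_threes_ge3 (p m a b : nat) :
  (2 * p + 3 * a = 2 * m + 3 * b)%N -> odd (p + m + a + b) -> (3 <= p + m)%N.
Proof. lia. Qed.

Lemma pm23_counts (s : seq int) : all (mem pm23) s ->
  [/\ \sum_(x <- s) x = 2 * ((count_mem 2 s)%:Z - (count_mem (-2) s)%:Z)
                        + 3 * ((count_mem 3 s)%:Z - (count_mem (-3) s)%:Z),
      count (mem pm2) s = (count_mem 2%R s + count_mem (-2)%R s)%N
    & size s = (count_mem 2%R s + count_mem (-2)%R s
                + count_mem 3%R s + count_mem (-3)%R s)%N].
Proof.
elim: s => [|x s IH] /=; first by rewrite big_nil.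
case/andP=> x_pm23 /IH[sum_s count_s size_s].
rewrite big_cons sum_s count_s size_s; move: x_pm23; rewrite !inE.
by case/or4P=> /eqP->; split; rewrite /=; lia.
Qed.

Lemma zero_sum_pm23_seq (s : seq int) : all (mem pm23) s ->
  \sum_(x <- s) x = 0 -> odd (size s) -> (3 <= count (mem pm2) s)%N.
Proof.
case/pm23_counts=> -> -> -> sum0 odd_s.
by apply: (balanced_twos_threes_ge3 _ odd_s); lia.
Qed.

Lemma zero_sum_pm23 (I : finType) (x : I -> int) : (forall i, x i \in pm23) ->
  \sum_i x i = 0 -> odd #|I| -> (3 <= \sum_(i | x i \in pm2) 1)%N.
Proof.
move=> x_pm23 sum0 odd_I; rewrite -(big_map x (mem pm2) (fun=> 1%N)) sum1_count.
apply: zero_sum_pm23_seq; rewrite ?big_map //.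
- by apply/allP=> _ /mapP[i _ ->]; apply: x_pm23.
- by rewrite -sum1_size big_map sum1_card.
Qed.

Definition ints_abs_le4 : seq int := [:: -4; -3; -2; -1; 0; 1; 2; 3; 4].

Lemma sqr_le22_abs_le4 (a : int) : a ^+ 2 <= 22 -> a \in ints_abs_le4.
Proof.
rewrite expr2 => a2_le22; have /andP[lo hi] : -4 <= a <= 4 by apply/andP; split; nia.
have : a = -4 \/ a = -3 \/ a = -2 \/ a = -1 \/ a = 0 \/ a = 1 \/ a = 2 \/ a = 3 \/ a = 4.
  by lia.
by case=> [->|[->|[->|[->|[->|[->|[->|[->|->]]]]]]]].
Qed.

Lemma three_squares_eq22 (a b c : int) : a ^+ 2 + b ^+ 2 + c ^+ 2 = 22 ->
  [/\ a \in pm23, b \in pm23, c \in pm23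
    & ((a \in pm2) + (b \in pm2) + (c \in pm2) = 1)%N].
Proof.
have small (x y z : int) : x ^+ 2 + y ^+ 2 + z ^+ 2 = 22 -> x \in ints_abs_le4.
  by move=> xyz22; apply: sqr_le22_abs_le4; rewrite -xyz22 -addrA lerDl addr_ge0 ?sqr_ge0.
have table : all (fun a => all (fun b => all (fun c =>
    (a ^+ 2 + b ^+ 2 + c ^+ 2 != 22) ||
    [&& a \in pm23, b \in pm23, c \in pm23
      & (a \in pm2) + (b \in pm2) + (c \in pm2) == 1]%N)
    ints_abs_le4) ints_abs_le4) ints_abs_le4 by vm_compute.
move=> abc22; have /small a_small := abc22.
have /small b_small : b ^+ 2 + c ^+ 2 + a ^+ 2 = 22 by rewrite -abc22; ring.
have /small c_small : c ^+ 2 + a ^+ 2 + b ^+ 2 = 22 by rewrite -abc22; ring.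
move: table => /allP/(_ a a_small)/allP/(_ b b_small)/allP/(_ c c_small).
by rewrite /= abc22 eqxx /= => /and4P[-> -> -> /eqP].
Qed.

Lemma sum3_sqr_eq22 (f : 'I_3 -> int) : \sum_j f j ^+ 2 = 22 ->
  (forall j, f j \in pm23) /\ (\sum_(j | f j \in pm2) 1 = 1)%N.
Proof.
rewrite !big_ord_recl big_ord0 addr0 addrA => /three_squares_eq22[f0 f1 f2 two1].
split; last by rewrite big_mkcond !big_ord_recl big_ord0 /= addn0 addnA.
move=> j; have [->|[->|->]] // :
    j = ord0 \/ j = lift ord0 ord0 \/ j = lift ord0 (lift ord0 ord0).
by case: j => -[|[|[|//]]] ?; [left | right; left | right; right]; apply: val_inj.
Qed.

Lemma admissible3_22_ge9 n : odd n -> admissible 3 22 n -> (9 <= n)%N.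
Proof.
move=> odd_n [v [v22 sum0]].
(* [v i 0 j] cannot be written inside [%N] scope, where [0] would be a nat. *)
pose c i : 'I_3 -> int := v i 0.
have /all_and2[c_pm23 c_two1] := fun i => sum3_sqr_eq22 (v22 i).
have col_ge3 j : (3 <= \sum_(i | c i j \in pm2) 1)%N.
  apply: zero_sum_pm23; [by move=> i; apply: c_pm23 | | by rewrite card_ord].
  by have := congr1 (fun w : 'rV[int]_3 => w 0 j) sum0; rewrite /= summxE mxE.
have twos_total : (\sum_j \sum_(i | c i j \in pm2) 1 = n)%N.
  rewrite (exchange_big_dep xpredT) //= -[RHS]card_ord -sum1_card.
  by apply: eq_bigr => i _; apply: c_two1.
rewrite -twos_total; apply: (@leq_trans (\sum_(j < 3) 3)%N).
- by rewrite big_const_ord.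
- by apply: leq_sum => j _; apply: col_ge3.
Qed.

(* The cyclic shifts of (2, 3, 3), (2, -3, -3) and (2, -3, -3). *)
Definition witness9 (i : 'I_9) : 'rV[int]_3 :=
  \row_j (if (j == i %% 3 :> nat)%N then 2 else if (i < 3)%N then 3 else -3).

Lemma admissible3_22_9 : admissible 3 22 9.
Proof.
exists witness9; split.
  move=> i; rewrite /sqnorm !big_ord_recr big_ord0 /= !mxE.
  by case: i => -[|[|[|[|[|[|[|[|[|//]]]]]]]]].
apply/rowP => j; rewrite summxE !big_ord_recr big_ord0 /= !mxE.
by case: j => -[|[|[|//]]].
Qed.

Theorem theorem4 : C_is 3 22 9.
Proof.
right; split=> //; split; first exact: admissible3_22_9.
by move=> n odd_n lt_n9 /(admissible3_22_ge9 odd_n); rewrite leqNgt lt_n9.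
Qed.
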